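(* Let $S:=K_T(\mathrm{pt})[X_1^{(1)},Y_1^{(1)},e_1(X^{(2)}),e_2(X^{(2)}),Y_1^{(2)}]$ be a polynomial ring in five independent indeterminates over $K_T(\mathrm{pt})=\mathbb Z[T_1^{\pm1},T_2^{\pm1},T_3^{\pm1}]$, and write $e_i(T)$ for the elementary symmetric polynomials in $T_1,T_2,T_3$. Let $I_q^{\mathrm{poly}}\subset S[q_1,q_2]$ be the ideal generated by $X_1^{(1)}+Y_1^{(1)}-e_1(X^{(2)})$, $X_1^{(1)}Y_1^{(1)}-(1-q_1)e_2(X^{(2)})$, $(1-q_2)\big(e_1(X^{(2)})+Y_1^{(2)}-e_1(T)\big)$, $\big(e_1(X^{(2)})-q_2X_1^{(1)}\big)Y_1^{(2)}-(1-q_2)\big(e_2(T)-e_2(X^{(2)})\big)$, $e_2(X^{(2)})Y_1^{(2)}-(1-q_2)e_3(T)$, and let $I_q\subset S[\![q_1,q_2]\!]$ be the ideal generated by the same five elements. Then the natural ring homomorphism $\Phi^{\mathrm{poly}}:S[q_1,q_2]/I_q^{\mathrm{poly}}\to S[\![q_1,q_2]\!]/I_q$ is not injective: the class of $e_1(X^{(2)})+Y_1^{(2)}-e_1(T)$ is nonzero in $S[q_1,q_2]/I_q^{\mathrm{poly}}$ but lies in the kernel of $\Phi^{\mathrm{poly}}$. *)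

From HB Require Import structures.
From mathcomp Require Import all_boot all_algebra fraction.
From mathcomp Require Import mpoly.
From mathcomp Require Import boolp.

Set Implicit Arguments.
Unset Strict Implicit.
Unset Printing Implicit Defensive.

Import GRing.Theory.
Local Open Scope ring_scope.

(* K_T(pt) = Z[T1^{+-1}, T2^{+-1}, T3^{+-1}], realised as the subring  *)
(* of the fraction field of Z[T1,T2,T3] consisting of the elements     *)
(* p / (T1 T2 T3)^k with p a polynomial.                               *)

Definition ZT := {mpoly int[3]}.
Definition KFrac := {fraction ZT}.
Local Notation "x %:F" := (@FracField.tofrac ZT x).

Definition Tmon : ZT := 'X_(0 : 'I_3) * 'X_(1 : 'I_3) * 'X_(2 : 'I_3).

Definition laurent_pred : pred KFrac :=
  fun x => `[< exists k : nat, exists p : ZT, x * (Tmon ^+ k)%:F = p%:F >].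

Lemma laurent_subring_closed : subring_closed laurent_pred.
Proof.
split.
- apply/asboolP; exists 0%N, 1; by rewrite expr0 tofrac1 mulr1.
- move=> x y /asboolP [kx [px Hx]] /asboolP [ky [py Hy]].
  apply/asboolP; exists (kx + ky)%N, (px * Tmon ^+ ky - py * Tmon ^+ kx).
  rewrite tofracB !tofracM -Hx -Hy exprD tofracM.
  by rewrite mulrBl; congr (_ - _); rewrite -!mulrA; congr (_ * _);
     rewrite mulrC // ; rewrite [X in _ = X]mulrC.
- move=> x y /asboolP [kx [px Hx]] /asboolP [ky [py Hy]].
  apply/asboolP; exists (kx + ky)%N, (px * py).
  rewrite tofracM -Hx -Hy exprD tofracM.
  by rewrite -!mulrA; congr (_ * _); rewrite mulrC -mulrA; congr (_ * _);
     rewrite mulrC.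
Qed.

Record KT := KT_mk { kt_val : KFrac; kt_valP : kt_val \in laurent_pred }.

HB.instance Definition _ := [isSub for kt_val].
HB.instance Definition _ := [Choice of KT by <:].
HB.instance Definition _ :=
  GRing.SubChoice_isSubComNzRing.Build KFrac laurent_pred KT laurent_subring_closed.

Lemma T_in_laurent (i : 'I_3) : ('X_i : ZT)%:F \in laurent_pred.
Proof. by apply/asboolP; exists 0%N, 'X_i; rewrite expr0 tofrac1 mulr1. Qed.

Definition T (i : 'I_3) : KT := KT_mk (T_in_laurent i).

Definition e1T : KT := T 0 + T 1 + T 2.
Definition e2T : KT := T 0 * T 1 + T 0 * T 2 + T 1 * T 2.
Definition e3T : KT := T 0 * T 1 * T 2.

Definition S := {mpoly KT[5]}.
Definition X11 : S := 'X_(0 : 'I_5).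
Definition Y11 : S := 'X_(1 : 'I_5).
Definition e1X2 : S := 'X_(2 : 'I_5).
Definition e2X2 : S := 'X_(3 : 'I_5).
Definition Y12 : S := 'X_(4 : 'I_5).

Definition Sq := {mpoly S[2]}.
Definition q1 : Sq := 'X_(0 : 'I_2).
Definition q2 : Sq := 'X_(1 : 'I_2).
Definition cS (s : S) : Sq := s%:MP.
Definition cK (k : KT) : Sq := (k%:MP : S)%:MP.

Definition gens (i : 'I_5) : Sq :=
  match val i with
  | 0 => cS X11 + cS Y11 - cS e1X2
  | 1 => cS X11 * cS Y11 - (1 - q1) * cS e2X2
  | 2 => (1 - q2) * (cS e1X2 + cS Y12 - cK e1T)
  | 3 => (cS e1X2 - q2 * cS X11) * cS Y12 - (1 - q2) * (cK e2T - cS e2X2)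
  | _ => cS e2X2 * cS Y12 - (1 - q2) * cK e3T
  end.

Definition fq : Sq := cS e1X2 + cS Y12 - cK e1T.

Definition in_Ipoly (f : Sq) : Prop :=
  exists g : 'I_5 -> Sq, f = \sum_(i < 5) g i * gens i.

(* Formal power series ring S[[q1,q2]]: a series is its coefficient   *)
(* family (i, j) |-> coefficient of q1^i q2^j, with the Cauchy product.*)
Definition pseries (R : nzRingType) := nat -> nat -> R.

Definition psmul (R : nzRingType) (F G : pseries R) : pseries R :=
  fun i j => \sum_(k < i.+1) \sum_(l < j.+1) F k l * G (i - k)%N (j - l)%N.

Definition mon2 (i j : nat) : 'X_{1..2} :=
  [multinom (if val k == 0%N then i else j) | k < 2].

Definition ps_of (p : Sq) : pseries S := fun i j => p@_(mon2 i j).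

Definition in_Iq (F : pseries S) : Prop :=
  exists g : 'I_5 -> pseries S,
    forall i j, F i j = \sum_(k < 5) psmul (g k) (ps_of (gens k)) i j.

From HB Require Import structures.
From mathcomp Require Import all_boot all_algebra fraction.
From mathcomp Require Import mpoly.

(* Non-membership: the specialization q1 = 0, q2 = 1, with all five
   variables of S sent to 0, is a ring morphism S[q1,q2] -> K_T(pt) that
   kills every generator, but sends e1(X^(2)) + Y1^(2) - e1(T) to -e1(T) <> 0.
   Membership: in S[[q1,q2]] the factor 1 - q2 of the third generator is a
   unit with inverse sum_j q2^j, so the element is that inverse times the
   third generator. *)

Set Implicit Arguments.
Unset Strict Implicit.
Unset Printing Implicit Defensive.
Import GRing.Theory.
Local Open Scope ring_scope.

Lemma in_Ipoly_rmorph (R : nzRingType) (f : {rmorphism Sq -> R}) (p : Sq) :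
  (forall i, f (gens i) = 0) -> in_Ipoly p -> f p = 0.
Proof.
move=> f_gens [g ->]; rewrite rmorph_sum big1 // => i _.
by rewrite rmorphM f_gens mulr0.
Qed.

Definition eval_q2_1 (p : Sq) : KT :=
  (p.@[fun k : 'I_2 => if val k == 0%N then 0 else 1]).@[fun=> 0].

HB.instance Definition _ := GRing.RMorphism.copy eval_q2_1
  (meval (fun=> 0) \o meval (fun k : 'I_2 => if val k == 0%N then 0 else 1)).

Lemma eval_q2_1_cS (s : S) : eval_q2_1 (cS s) = s.@[fun=> 0].
Proof. by rewrite /eval_q2_1 mevalC. Qed.

Lemma eval_q2_1_cK (k : KT) : eval_q2_1 (cK k) = k.
Proof. by rewrite /eval_q2_1 !mevalC. Qed.

Lemma eval_q2_1_var (i : 'I_5) : eval_q2_1 (cS 'X_i) = 0.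
Proof. by rewrite eval_q2_1_cS mevalXU. Qed.

Lemma eval_q2_1_q1 : eval_q2_1 q1 = 0.
Proof. by rewrite /eval_q2_1 mevalXU meval0. Qed.

Lemma eval_q2_1_q2 : eval_q2_1 q2 = 1.
Proof. by rewrite /eval_q2_1 mevalXU meval1. Qed.

Lemma eval_q2_1_gens i : eval_q2_1 (gens i) = 0.
Proof.
case: i => [[|[|[|[|[|n]]]]] lt_i5]; rewrite /gens /=;
rewrite !(rmorphB, rmorphD, rmorphM, rmorph1) /= ?eval_q2_1_cK ?eval_q2_1_q1
  ?eval_q2_1_q2 /X11 /Y11 /e1X2 /e2X2 /Y12 ?eval_q2_1_var;
by rewrite ?subrr ?mulr0 ?mul0r ?subr0 ?addr0 ?sub0r ?oppr0.
Qed.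

Lemma e1T_neq0 : e1T != 0.
Proof.
apply/negP => /eqP e1T0.
have : kt_val e1T = 0 by rewrite e1T0.
rewrite /= -!tofracD => /eqP; rewrite tofrac_eq0 => /eqP sumX0.
have := congr1 (mcoeff U_(0 : 'I_3)) sumX0.
by rewrite !mcoeffD !mcoeffXU mcoeff0.
Qed.

Lemma fq_notin_Ipoly : ~ in_Ipoly fq.
Proof.
move/(in_Ipoly_rmorph eval_q2_1_gens)/eqP.
rewrite !rmorphB !rmorphD /= eval_q2_1_cK /e1X2 /Y12 !eval_q2_1_var !add0r.
by rewrite oppr_eq0 (negbTE e1T_neq0).
Qed.

Lemma mon2_eq0 i j : (mon2 i j == 0%MM) = (i == 0%N) && (j == 0%N).
Proof.
apply/eqP/andP => [/mnmP mon2E | [/eqP-> /eqP->]].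
  by have := mon2E 0; have := mon2E 1; rewrite !mnmE /= => -> ->.
by apply/mnmP => k; rewrite !mnmE; case: ifP.
Qed.

Lemma U1_eq_mon2 i j : (U_(1 : 'I_2)%MM == mon2 i j) = (i == 0%N) && (j == 1%N).
Proof.
apply/eqP/andP => [/mnmP mon2E | [/eqP-> /eqP->]].
  by have := mon2E 0; have := mon2E 1; rewrite !mnmE /= => <- <-.
by apply/mnmP => k; rewrite !mnmE; case: k => [[|[|]]].
Qed.

Lemma ps_of_cS (c : S) i j : ps_of (cS c) i j = c *+ ((i == 0%N) && (j == 0%N)).
Proof. by rewrite /ps_of mcoeffC mon2_eq0 mulr_natr. Qed.

Lemma ps_of_q2_cS (c : S) i j :
  ps_of (q2 * cS c) i j = c *+ ((i == 0%N) && (j == 1%N)).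
Proof. by rewrite /ps_of mulrC mcoeffCM mcoeffX U1_eq_mon2 mulr_natr. Qed.

Definition geom_q2 : pseries S := fun i _ => (i == 0%N)%:R.

Lemma telescope_rev_sum (V : zmodType) (c : V) j :
  \sum_(l < j.+1) (c *+ (j - l == 0)%N - c *+ (j - l == 1)%N) = c *+ (j == 0%N).
Proof.
elim: j => [|j IHj]; first by rewrite big_ord1 subr0.
rewrite big_ord_recl subn0 /=.
under eq_bigr do rewrite subSS.
by rewrite IHj mulr0n sub0r addNr.
Qed.

Lemma psmul_geom_q2 (c : S) i j :
  psmul geom_q2 (ps_of ((1 - q2) * cS c)) i j = ps_of (cS c) i j.
Proof.
rewrite /psmul big_ord_recl [X in _ + X]big1 ?addr0 => [|k _]; last first.
  by rewrite big1 // => l _; rewrite mul0r.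
under eq_bigr => l _ do
  rewrite mul1r subn0 mulrBl mul1r /ps_of mcoeffB -!/(ps_of _ _ _) ps_of_cS ps_of_q2_cS.
rewrite ps_of_cS; case: (i =P 0%N) => [_ | _] /=.
  exact: telescope_rev_sum.
by rewrite big1 // => l _; rewrite subrr.
Qed.

Lemma gens2E : gens 2 = (1 - q2) * fq.
Proof. by []. Qed.

Lemma fqE : fq = cS (e1X2 + Y12 - e1T%:MP).
Proof. by rewrite /fq /cS /cK !raddfB !raddfD. Qed.

Lemma fq_in_Iq : in_Iq (ps_of fq).
Proof.
exists (fun k => if val k == 2%N then geom_q2 else fun _ _ => 0) => i j.
rewrite (bigD1 (2 : 'I_5)) //= big1 ?addr0 => [|k /negbTE neq_k2]; last first.
  have -> : (val k == 2%N) = false := neq_k2.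
  by rewrite /psmul big1 // => a _; rewrite big1 // => b _; rewrite mul0r.
by rewrite gens2E fqE psmul_geom_q2.
Qed.

Theorem mainTheorem11 : ~ in_Ipoly fq /\ in_Iq (ps_of fq).
Proof. exact: (conj fq_notin_Ipoly fq_in_Iq). Qed.
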